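(* Let $\Lambda$ be a countable index set, $\overline{a},\overline{r}$ sequences of positive reals indexed by $\Lambda$, $t\in(1,2)$ and $x\in\mathbb{R}^\Lambda$. Then $x\in k_t$ if and only if $\eta(x):=\sup_{\alpha>0}\alpha^{t-1}\|T_\alpha(x)\|_{\overline{r},1}<\infty$. More precisely, $\eta(x)\le2(1-2^{1-t})^{-1}\|x\|_{k_t}^t$ and $\|x\|_{k_t}\le\eta(x)^{1/t}$.
   Context: $\|x\|_{\overline{r},1}=\sum_{j\in\Lambda}\overline{r}_j|x_j|$ (possibly $+\infty$). For $t\in(0,2)$, $k_t=\{x\in\mathbb{R}^\Lambda:\|x\|_{k_t}<\infty\}$ with $\|x\|_{k_t}=\sup_{\alpha>0}\alpha\left(\sum_{j}\overline{a}_j^{-2}\overline{r}_j^2\mathbf{1}_{\{\overline{a}_j^{-2}\overline{r}_j\alpha<|x_j|\}}\right)^{1/t}$. For $\alpha>0$, $T_\alpha(x)_j=x_j$ if $\overline{a}_j^{-2}\overline{r}_j\alpha<|x_j|$ and $T_\alpha(x)_j=0$ otherwise. *)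

From HB Require Import structures.
From mathcomp Require Import all_boot all_order all_algebra.
From mathcomp Require Import all_classical all_reals all_analysis.
Set Implicit Arguments. Unset Strict Implicit. Unset Printing Implicit Defensive.
Import Order.TTheory GRing.Theory Num.Theory.
Local Open Scope classical_set_scope.
Local Open Scope ring_scope.

(* Lambda : countType (countable index set); a, r : Lambda -> R (positive);
   all (possibly infinite) sums of nonnegative terms are taken in \bar R via esum. *)
Section Defs.
Variables (R : realType) (L : countType).

Definition rnorm1 (r x : L -> R) : \bar R :=
  \esum_(j in [set: L]) (r j * `|x j|)%:E.

Definition above (a r x : L -> R) (alpha : R) (j : L) : bool :=
  (a j ^-2 * r j * alpha < `|x j|).

Definition kt_mass (a r x : L -> R) (alpha : R) : \bar R :=
  \esum_(j in [set: L]) (if above a r x alpha j then (a j ^-2 * r j ^+ 2)%:E else 0%E).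

Definition kt_norm (a r : L -> R) (t : R) (x : L -> R) : \bar R :=
  ereal_sup [set y | exists2 alpha : R, 0 < alpha &
                       y = (alpha%:E * (kt_mass a r x alpha `^ t^-1))%E].

Definition in_kt (a r : L -> R) (t : R) (x : L -> R) : Prop :=
  (kt_norm a r t x < +oo)%E.

Definition Talpha (a r : L -> R) (alpha : R) (x : L -> R) : L -> R :=
  fun j => if above a r x alpha j then x j else 0.

Definition eta_kt (a r : L -> R) (t : R) (x : L -> R) : \bar R :=
  ereal_sup [set y | exists2 alpha : R, 0 < alpha &
                       y = ((alpha `^ (t - 1))%:E * rnorm1 r (Talpha a r alpha x))%E].
End Defs.

From HB Require Import structures.
From mathcomp Require Import all_boot all_order all_algebra.
From mathcomp Require Import all_classical all_reals all_analysis.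
From mathcomp Require Import ring.
Set Implicit Arguments. Unset Strict Implicit. Unset Printing Implicit Defensive.
Import Order.TTheory GRing.Theory Num.Theory.
Local Open Scope classical_set_scope.
Local Open Scope ring_scope.

(* Write w_j = a_j^-2 r_j, M(alpha) = sum_{w_j alpha < |x_j|} w_j r_j and
   N(alpha) = ||T_alpha x||_{r,1}, so that ||x||_{k_t} = sup alpha M(alpha)^(1/t)
   and eta(x) = sup alpha^(t-1) N(alpha).  Every j counted in M(alpha) has
   alpha w_j r_j < r_j |x_j|, hence alpha M(alpha) <= N(alpha), which gives
   alpha^t M(alpha) <= eta(x) and ||x||_{k_t} <= eta(x)^(1/t).  Conversely,
   cutting |x_j| at the dyadic levels 2^i alpha w_j,
   r_j |x_j| <= sum_i 2^(i+1) alpha w_j r_j [2^i alpha w_j < |x_j|], so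
   N(alpha) <= sum_i 2^(i+1) alpha M(2^i alpha)
            <= sum_i 2^(i+1) alpha (||x||_{k_t} / (2^i alpha))^t
             = 2 alpha^(1-t) ||x||_{k_t}^t sum_i (2^(1-t))^i,
   a geometric series because t > 1. *)

Section RealLemmas.
Variable R : realType.

Lemma le_sum_dyadic_layers (w c al u : R) (n : nat) :
  0 < w -> 0 <= c -> 0 < al -> u <= 2 ^+ n * (w * al) ->
  (if w * al < u then c * u else 0) <=
  \sum_(i < n) 2 ^+ i.+1 * al * (if w * (2 ^+ i * al) < u then w * c else 0).
Proof.
move=> w_gt0 c_ge0 al_gt0; elim: n => [|n IHn] u_le.
  by rewrite big_ord0; move: u_le; rewrite expr0 mul1r leNgt => /negbTE ->.
rewrite big_ord_recr /=; have [lt_u|le_u] := ltP (w * (2 ^+ n * al)) u; last first.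
  by rewrite mulr0 addr0 IHn // mulrCA.
have layers_ge0 : 0 <= \sum_(i < n)
    2 ^+ i.+1 * al * (if w * (2 ^+ i * al) < u then w * c else 0).
  by apply: sumr_ge0 => i _; case: ifP => _; rewrite ?mulr0 // !mulr_ge0 // ltW.
have u_gt0 : 0 < u by apply: le_lt_trans lt_u; rewrite !mulr_ge0 // ltW.
apply: le_trans (_ : c * u <= _); first by case: ifP => // _; rewrite mulr_ge0 // ltW.
rewrite -[leLHS]add0r lerD //.
have -> : 2 ^+ n.+1 * al * (w * c) = c * (2 ^+ n.+1 * (w * al)) by ring.
by rewrite ler_wpM2l.
Qed.

Lemma exists_pow2_ge (I : eqType) (s : seq I) (f g : I -> R) :
  (forall j, 0 < g j) -> exists n, forall j, j \in s -> f j <= 2 ^+ n * g j.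
Proof.
move=> g_gt0; elim: s => [|j s [n IHs]]; first by exists 0%N.
pose m := Num.bound `|f j / g j|.
have le_m : f j / g j <= 2 ^+ m.
  apply: le_trans (ler_norm _) (ltW (lt_le_trans (archi_boundP (normr_ge0 _)) _)).
  by rewrite -natrX ler_nat ltnW // ltn_expl.
exists (maxn n m) => i; rewrite inE => /predU1P[->|/IHs le_i].
  by rewrite -ler_pdivrMr //; apply: le_trans le_m _; rewrite ler_eXn2l ?ltr1n // leq_maxr.
by apply: le_trans le_i _; rewrite ler_pM2r // ler_eXn2l ?ltr1n // leq_maxl.
Qed.

Lemma powR2_lt1 (t : R) : 1 < t -> 2 `^ (1 - t) < 1.
Proof.
by move=> t_gt1; rewrite /powR pnatr_eq0 expR_lt1 pmulr_llt0 ?ln_gt0 ?ltr1n // subr_lt0.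
Qed.

Lemma powR_exprn (c s : R) (i : nat) : 0 <= c -> (c ^+ i) `^ s = (c `^ s) ^+ i.
Proof. by move=> c_ge0; rewrite -powR_mulrn // powRAC powR_mulrn // powR_ge0. Qed.

Lemma mulr_powR_div (b k t : R) : 0 < b -> b * (k `^ t / b `^ t) = k `^ t * b `^ (1 - t).
Proof.
move=> b_gt0; rewrite powRB; last by rewrite (gt_eqF b_gt0) implybT.
by rewrite powRr1 ?ltW // mulrCA.
Qed.

End RealLemmas.

Section Esum.
Variables (R : realType) (T : choiceType).

Lemma EFin_sum_le_esum (f : T -> R) (s : seq T) : uniq s ->
  ((\sum_(j <- s) f j)%:E <= \esum_(j in [set: T]) (f j)%:E)%E.
Proof.
move=> s_uniq; apply: esum_ge; exists [set` s]; first by split; [exact: finite_seq|].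
by rewrite -fsbig_seq // sumEFin.
Qed.

Lemma esum_EFin_le (f : T -> R) (c : \bar R) :
  (forall s, uniq s -> ((\sum_(j <- s) f j)%:E <= c)%E) ->
  (\esum_(j in [set: T]) (f j)%:E <= c)%E.
Proof.
move=> le_c; apply: ge_ereal_sup => _ [A [finA _] <-].
by rewrite fsbig_finite // sumEFin le_c // fset_uniq.
Qed.

End Esum.

Section KtNorm.
Variables (R : realType) (L : countType) (a r : L -> R).
Hypotheses (a_gt0 : forall j, 0 < a j) (r_gt0 : forall j, 0 < r j).
Variables (t : R) (x : L -> R).

Let threshold_gt0 j : 0 < a j ^-2 * r j.
Proof. by rewrite mulr_gt0 // invr_gt0 exprn_gt0. Qed.

Let mass_ge0 j : 0 <= a j ^-2 * r j ^+ 2.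
Proof. by rewrite ltW // mulr_gt0 // ?invr_gt0 exprn_gt0. Qed.

Lemma kt_massE al : kt_mass a r x al =
  \esum_(j in [set: L]) (if above a r x al j then a j ^-2 * r j ^+ 2 else 0)%:E.
Proof. by apply: eq_esum => j _; case: ifP. Qed.

Lemma rnorm1_TalphaE al : rnorm1 r (Talpha a r al x) =
  \esum_(j in [set: L]) (if above a r x al j then r j * `|x j| else 0)%:E.
Proof. by apply: eq_esum => j _; rewrite /Talpha; case: ifP; rewrite ?normr0 ?mulr0. Qed.

Lemma kt_mass_ge0 al : (0 <= kt_mass a r x al)%E.
Proof. by apply: esum_ge0 => j _; case: ifP; rewrite ?lee_fin. Qed.

Lemma rnorm1_ge0 y : (0 <= rnorm1 r y)%E.
Proof. by apply: esum_ge0 => j _; rewrite lee_fin mulr_ge0 // ltW. Qed.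

Lemma kt_norm_ge0 : (0 <= kt_norm a r t x)%E.
Proof.
apply: le_trans (_ : 0 <= 1%:E * kt_mass a r x 1 `^ t^-1)%E _; first by rewrite mul1e poweR_ge0.
by apply: ereal_sup_ubound; exists 1%R.
Qed.

Lemma eta_kt_ge0 : (0 <= eta_kt a r t x)%E.
Proof.
apply: le_trans (_ : 0 <= (1 `^ (t - 1))%:E * rnorm1 r (Talpha a r 1 x))%E _.
  by rewrite mule_ge0 ?rnorm1_ge0 // lee_fin powR_ge0.
by apply: ereal_sup_ubound; exists 1%R.
Qed.

Lemma kt_mass_le_kt_norm (k be : R) :
  0 < t -> (kt_norm a r t x <= k%:E)%E -> 0 < be ->
  ((be `^ t)%:E * kt_mass a r x be <= (k `^ t)%:E)%E.
Proof.
move=> t_gt0 le_k be_gt0.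
have le_sup : (be%:E * kt_mass a r x be `^ t^-1 <= k%:E)%E.
  by apply: le_trans le_k; apply: ereal_sup_ubound; exists be.
have lhs_ge0 : (0 <= be%:E * kt_mass a r x be `^ t^-1)%E.
  by rewrite mule_ge0 ?poweR_ge0 // lee_fin ltW.
have := gt0_ler_poweR (ltW t_gt0) _ _ le_sup.
rewrite !in_itv /= !leey lhs_ge0 (le_trans lhs_ge0 le_sup) => /(_ isT isT).
rewrite poweRM ?poweR_ge0 ?lee_fin ?(ltW be_gt0) // -poweRrM mulVf ?gt_eqF //.
by rewrite poweRe1 ?kt_mass_ge0 // !poweR_EFin.
Qed.

Lemma sum_kt_mass_le (k be : R) (s : seq L) :
  0 < t -> (kt_norm a r t x <= k%:E)%E -> 0 < be -> uniq s ->
  \sum_(j <- s) (if above a r x be j then a j ^-2 * r j ^+ 2 else 0)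
    <= k `^ t / be `^ t.
Proof.
move=> t_gt0 le_k be_gt0 s_uniq; rewrite ler_pdivlMr ?powR_gt0 // mulrC -lee_fin EFinM.
apply: le_trans (kt_mass_le_kt_norm t_gt0 le_k be_gt0).
by rewrite lee_wpmul2l ?lee_fin ?powR_ge0 // kt_massE EFin_sum_le_esum.
Qed.

Lemma rnorm1_Talpha_le (k al : R) :
  1 < t -> (kt_norm a r t x <= k%:E)%E -> 0 < al ->
  (rnorm1 r (Talpha a r al x)
    <= (2 * (1 - 2 `^ (1 - t))^-1 * k `^ t * al `^ (1 - t))%:E)%E.
Proof.
move=> t_gt1 le_k al_gt0; have t_gt0 : 0 < t := lt_trans ltr01 t_gt1.
set q := 2 `^ (1 - t); set A := 2 * k `^ t * al `^ (1 - t).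
have q_gt0 : 0 < q by rewrite powR_gt0.
rewrite rnorm1_TalphaE; apply: esum_EFin_le => s s_uniq; rewrite lee_fin.
have [n le_n] := @exists_pow2_ge R L s (fun j => `|x j|) (fun j => a j ^-2 * r j * al)
  (fun j => mulr_gt0 (threshold_gt0 j) al_gt0).
pose layer i j := if above a r x (2 ^+ i * al) j then a j ^-2 * r j ^+ 2 else 0.
apply: le_trans (_ : \sum_(j <- s) \sum_(i < n) 2 ^+ i.+1 * al * layer i j <= _).
  rewrite big_seq_cond [leRHS]big_seq_cond; apply: ler_sum => j /andP[js _].
  rewrite /layer /above.
  have -> : a j ^-2 * r j ^+ 2 = a j ^-2 * r j * r j by rewrite [r j ^+ 2]expr2 mulrA.
  by apply: le_sum_dyadic_layers (le_n j js); rewrite // ltW.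
apply: le_trans (_ : \sum_(i < n) A * q ^+ i <= _).
  rewrite exchange_big /=; apply: ler_sum => i _; rewrite -mulr_sumr.
  apply: le_trans (_ : 2 ^+ i.+1 * al * (k `^ t / (2 ^+ i * al) `^ t) <= _).
    by rewrite ler_wpM2l ?sum_kt_mass_le ?mulr_gt0 ?exprn_gt0 // mulr_ge0 ?exprn_ge0 ?ltW.
  rewrite exprS -(mulrA 2) -mulrA mulr_powR_div ?mulr_gt0 ?exprn_gt0 //.
  by rewrite powRM ?exprn_ge0 ?(ltW al_gt0) // powR_exprn // /A -!mulrA [q ^+ i * _]mulrC.
have A_ge0 : 0 <= A by rewrite !mulr_ge0 ?powR_ge0.
have q_lt1 : `|q| < 1 by rewrite ger0_norm ?powR2_lt1 // ltW.
rewrite [leRHS](_ : _ = A / (1 - q)); last by rewrite /A; ring.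
by have := geometric_le_lim n A_ge0 q_gt0 q_lt1; rewrite /series /geometric /= big_mkord.
Qed.

Lemma mul_kt_mass_le_rnorm1 al :
  0 < al -> (al%:E * kt_mass a r x al <= rnorm1 r (Talpha a r al x))%E.
Proof.
move=> al_gt0; rewrite -lee_pdivlMl // kt_massE; apply: esum_EFin_le => s s_uniq.
rewrite lee_pdivlMl // -EFinM mulr_sumr rnorm1_TalphaE.
apply: le_trans (EFin_sum_le_esum _ s_uniq); rewrite lee_fin; apply: ler_sum => j _.
rewrite /above; case: ifP => [lt_j|_]; last by rewrite mulr0.
have -> : al * (a j ^-2 * r j ^+ 2) = r j * (a j ^-2 * r j * al) by ring.
by rewrite ler_wpM2l // ltW.
Qed.

Lemma kt_norm_term_le_eta al : 0 < t -> 0 < al ->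
  (al%:E * kt_mass a r x al `^ t^-1 <= eta_kt a r t x `^ t^-1)%E.
Proof.
move=> t_gt0 al_gt0.
have le_eta : ((al `^ t)%:E * kt_mass a r x al <= eta_kt a r t x)%E.
  apply: le_trans (_ : (al `^ (t - 1))%:E * rnorm1 r (Talpha a r al x) <= _)%E; last first.
    by apply: ereal_sup_ubound; exists al.
  rewrite -(mulr_powRB1 (ltW al_gt0) t_gt0) mulrC EFinM -muleA.
  by rewrite lee_wpmul2l ?lee_fin ?powR_ge0 // mul_kt_mass_le_rnorm1.
have lhs_ge0 : (0 <= (al `^ t)%:E * kt_mass a r x al)%E.
  by rewrite mule_ge0 ?kt_mass_ge0 // lee_fin powR_ge0.
have tV_ge0 : 0 <= t^-1 by rewrite invr_ge0 ltW.
have := gt0_ler_poweR tV_ge0 _ _ le_eta.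
rewrite !in_itv /= !leey lhs_ge0 eta_kt_ge0 => /(_ isT isT).
rewrite poweRM ?kt_mass_ge0 ?lee_fin ?powR_ge0 // poweR_EFin -powRrM mulfV ?gt_eqF //.
by rewrite powRr1 // ltW.
Qed.

Lemma kt_norm_le_eta : 0 < t -> (kt_norm a r t x <= eta_kt a r t x `^ t^-1)%E.
Proof.
by move=> t_gt0; apply: ge_ereal_sup => _ [al al_gt0 ->]; exact: kt_norm_term_le_eta.
Qed.

Lemma eta_le_kt_norm : 1 < t ->
  (eta_kt a r t x <= (2 * (1 - 2 `^ (1 - t))^-1)%:E * kt_norm a r t x `^ t)%E.
Proof.
move=> t_gt1; have t_gt0 : 0 < t := lt_trans ltr01 t_gt1.
have C_gt0 : 0 < 2 * (1 - 2 `^ (1 - t))^-1.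
  by rewrite mulr_gt0 // invr_gt0 subr_gt0 powR2_lt1.
have := kt_norm_ge0; case eK : kt_norm => [k| |] // k_ge0; last first.
  by rewrite poweRyr ?gt_eqF // gt0_muley ?lte_fin // leey.
rewrite poweR_EFin -EFinM; apply: ge_ereal_sup => _ [al al_gt0 ->].
have le_k : (kt_norm a r t x <= k%:E)%E by rewrite eK.
apply: le_trans (lee_wpmul2l _ (rnorm1_Talpha_le t_gt1 le_k al_gt0)) _.
  by rewrite lee_fin powR_ge0.
have powR_cancel : al `^ (1 - t) * al `^ (t - 1) = 1.
  rewrite -powRD; last by rewrite (gt_eqF al_gt0) implybT.
  by rewrite addrA subrK subrr powRr0.
by rewrite -EFinM lee_fin mulrC -!mulrA powR_cancel mulr1.
Qed.

End KtNorm.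

Theorem lemma5p1 (R : realType) (L : countType) (a r : L -> R)
  (ha : forall j, 0 < a j) (hr : forall j, 0 < r j)
  (t : R) (ht1 : 1 < t) (ht2 : t < 2) (x : L -> R) :
  (in_kt a r t x <-> (eta_kt a r t x < +oo)%E) /\
  (eta_kt a r t x <= (2 * (1 - 2 `^ (1 - t))^-1)%:E * (kt_norm a r t x `^ t))%E /\
  (kt_norm a r t x <= eta_kt a r t x `^ t^-1)%E.
Proof.
have t_gt0 : 0 < t := lt_trans ltr01 ht1.
have le_eta := eta_le_kt_norm ha hr x ht1.
have le_kt := kt_norm_le_eta ha hr x t_gt0.
split; [split=> [kt_fin|eta_fin] | by []].
- apply: le_lt_trans le_eta _; rewrite lte_mul_pinfty ?poweR_lty //.
  by rewrite lee_fin mulr_ge0 // invr_ge0 subr_ge0 ltW ?powR2_lt1.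
- by apply: le_lt_trans le_kt _; rewrite poweR_lty.
Qed.
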